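(* For any weight $\omega\in\mathbb{R}^J$ whose regular subdivision satisfies $\mathscr{T}_\omega=\mathscr{T}_{\max}$ (for instance any $\omega$ whose image in $L_{\mathrm{ext}}^\vee\otimes\mathbb{R}\cong H^2(X,\mathbb{R})$ is ample), the set $$\{\,y^{\ell_{\mathrm{ext}}^+(\mathcal{P})}-y^{\ell_{\mathrm{ext}}^-(\mathcal{P})}:\ \mathcal{P}\text{ a primitive collection of }\Sigma\,\}$$ is a minimal Gröbner basis of the toric ideal $I_\mathcal{A}$ with respect to $\omega$. Consequently the box operators of $\mathcal{M}(A_{\mathrm{ext}},\beta)$ are generated by the box operators $\partial^{\ell_{\mathrm{ext}}^+(\mathcal{P})}-\partial^{\ell_{\mathrm{ext}}^-(\mathcal{P})}$, $\mathcal{P}$ running over the primitive collections of $\Sigma$.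
   Context: $N\cong\mathbb{Z}^n$, $M$ dual. $X$ smooth projective toric with fan $\Sigma$ and nef-partition $\Sigma(1)=I_1\sqcup\cdots\sqcup I_r$ (each $E_i=\sum_{\rho\in I_i}D_\rho$ nef), $I_i=\{\rho_{i,1},\dots,\rho_{i,n_i}\}$, $J=\{(i,j):1\le i\le r,0\le j\le n_i\}$, $\nu_{i,j}=(\rho_{i,j},e_i)$ ($j\ge1$), $\nu_{i,0}=(0,e_i)$ in $N\times\mathbb{Z}^r$, $\mathcal{A}=\{\nu_{i,j}\}$. $A_{\mathrm{ext}}:\mathbb{Z}^J\to N\times\mathbb{Z}^r$, $e_{i,j}\mapsto\nu_{i,j}$, $L_{\mathrm{ext}}=\ker A_{\mathrm{ext}}\cong L=\ker(\mathbb{Z}^{\{(i,j):j\ge1\}}\to N)$. Toric ideal $I_\mathcal{A}=\langle y^{\ell^+}-y^{\ell^-}:\ell\in L_{\mathrm{ext}}\rangle\subset\mathbb{C}[y_{i,j}:(i,j)\in J]$, where $\ell=\ell^+-\ell^-$ with $\ell^\pm\ge0$ of disjoint supports; a weight $\omega\in\mathbb{R}^J$ defines leading terms by maximal $\omega$-weight, $\mathrm{wt}(y^m)=\sum\omega_{i,j}m_{i,j}$. The regular subdivision $\mathscr{T}_\omega$ of $\mathcal{A}$ is obtained by projecting the lower faces of the cone generated by $(\nu,\omega_\nu)$, $\nu\in\mathcal{A}$. $\mathscr{T}_{\max}$ is the triangulation whose maximal simplices (cones) have vertex sets $\{\nu_{1,0},\dots,\nu_{r,0}\}\cup\{\nu_{i,j}:\rho_{i,j}\in\sigma(1)\}$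 for $\sigma$ a maximal cone of $\Sigma$ (the fan of the total space of $\oplus_i\mathcal{O}_X(E_i)$). A primitive collection is $\mathcal{P}\subset\Sigma(1)$ not spanning a cone but with every proper subset spanning one; its primitive relation $\ell(\mathcal{P})\in L$ is the coefficient vector of $\sum_{\mathcal{P}}\rho_{i,j}-\sum_{\sigma(1)}c_{i,j}\rho_{i,j}=0$ where $\sigma$ is the cone containing $\sum_\mathcal{P}\rho_{i,j}$ in its relative interior and $c_{i,j}\in\mathbb{Z}_{>0}$; $\ell_{\mathrm{ext}}(\mathcal{P})\in L_{\mathrm{ext}}$ is its image under $L\cong L_{\mathrm{ext}}$. The GKZ system $\mathcal{M}(A_{\mathrm{ext}},\beta)$ is the Weyl algebra module on variables $x_{i,j}$ generated by box operators $\partial^{\ell^+}-\partial^{\ell^-}$ ($\ell\in L_{\mathrm{ext}}$) and Euler operators $\sum_{(i,j)}(\nu_{i,j})_kx_{i,j}\partial_{i,j}-\beta_k$. *)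

From HB Require Import structures.
From mathcomp Require Import all_boot all_order all_algebra.
From mathcomp Require Import mpoly.

Set Implicit Arguments.
Unset Strict Implicit.
Unset Printing Implicit Defensive.

Import Order.TTheory GRing.Theory Num.Theory.
Local Open Scope ring_scope.

(*  N = Z^n, vectors are functions 'I_n -> int.                          *)
(*  Sigma(1) = 'I_d : ray p has primitive generator ray p : 'I_n -> int. *)
(*  The fan Sigma is simplicial (smooth), so a cone is determined by its *)
(*  set of rays : Sigma : {set {set 'I_d}}.                              *)
(*  The nef partition is part : 'I_d -> 'I_r  (I_i = part^-1 i).          *)
(*  J = 'I_(d + r) : lshift r p  <-> nu_{p} = (ray p, e_{part p})        *)
(*                   rshift d i  <-> nu_{i,0} = (0, e_i).                *)
(*  N x Z^r = Z^(n+r), vectors 'I_(n+r) -> int.                          *)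

Definition pairing n (m v : 'I_n -> int) : int := \sum_(k < n) m k * v k.

Definition in_cone (R : realFieldType) n d (ray : 'I_d -> 'I_n -> int)
    (s : {set 'I_d}) (x : 'I_n -> R) : Prop :=
  exists a : 'I_d -> R,
    (forall p, 0 <= a p) /\ (forall p, p \notin s -> a p = 0) /\
    (forall k, x k = \sum_(p < d) a p * (ray p k)%:~R).

Definition max_cone d (Sigma : {set {set 'I_d}}) (s : {set 'I_d}) : Prop :=
  s \in Sigma /\ forall t : {set 'I_d}, t \in Sigma -> s \subset t -> t = s.

Definition smooth_projective_fan (R : realFieldType) n d
    (ray : 'I_d -> 'I_n -> int) (Sigma : {set {set 'I_d}}) : Prop :=
  (forall p, [set p] \in Sigma) /\
  (forall s t : {set 'I_d}, s \in Sigma -> t \subset s -> t \in Sigma) /\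
  (* two cones intersect in a common face *)
  (forall s t : {set 'I_d}, s \in Sigma -> t \in Sigma -> forall x : 'I_n -> R,
      in_cone ray s x -> in_cone ray t x -> in_cone ray (s :&: t) x) /\
  (* smoothness: the rays of each cone are part of a Z-basis of N *)
  (forall s, s \in Sigma ->
     (forall a : 'I_d -> R, (forall p, p \notin s -> a p = 0) ->
        (forall k, \sum_(p < d) a p * (ray p k)%:~R = 0) -> forall p, a p = 0) /\
     (forall a : 'I_d -> R, (forall p, p \notin s -> a p = 0) ->
        (forall k, exists z : int, \sum_(p < d) a p * (ray p k)%:~R = z%:~R) ->
        forall p, exists z : int, a p = z%:~R)) /\
  (forall x : 'I_n -> R, exists2 s, s \in Sigma & in_cone ray s x) /\
  (* projectivity: some divisor sum_p a_p D_p has strictly convex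
     support function *)
  (exists a : 'I_d -> int, forall s, max_cone Sigma s ->
     exists m : 'I_n -> int, forall p,
       (p \in s -> pairing m (ray p) = - a p) /\
       (p \notin s -> - a p < pairing m (ray p))).

(* the divisor E_i = sum_{p in I_i} D_p is nef (convex support function) *)
Definition nef_part n d r (ray : 'I_d -> 'I_n -> int)
    (Sigma : {set {set 'I_d}}) (part : 'I_d -> 'I_r) (i : 'I_r) : Prop :=
  forall s, max_cone Sigma s ->
    exists m : 'I_n -> int, forall p,
      (p \in s -> pairing m (ray p) = - (part p == i)%:Z) /\
      (p \notin s -> - (part p == i)%:Z <= pairing m (ray p)).

Definition nef_partition n d r (ray : 'I_d -> 'I_n -> int)
    (Sigma : {set {set 'I_d}}) (part : 'I_d -> 'I_r) : Prop :=
  forall i : 'I_r, (exists p, part p = i) /\ nef_part ray Sigma part i.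

Definition nu n d r (ray : 'I_d -> 'I_n -> int) (part : 'I_d -> 'I_r)
    (j : 'I_(d + r)) (k : 'I_(n + r)) : int :=
  match split j with
  | inl p => match split k with
             | inl k1 => ray p k1
             | inr k2 => (part p == k2)%:Z
             end
  | inr i => match split k with
             | inl _ => 0
             | inr k2 => (i == k2)%:Z
             end
  end.

Definition Lext n d r (ray : 'I_d -> 'I_n -> int) (part : 'I_d -> 'I_r)
    (l : 'I_(d + r) -> int) : Prop :=
  forall k, \sum_(j < d + r) l j * nu ray part j k = 0.

Definition ext d r (part : 'I_d -> 'I_r) (l : 'I_d -> int) (j : 'I_(d + r)) : int :=
  match split j with
  | inl p => l p
  | inr i => - \sum_(p < d | part p == i) l p
  end.

(* cells of the regular subdivision T_omega : index sets of the points on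
   a lower face of the cone spanned by the (nu_j, omega_j) *)
Definition reg_cell (R : realFieldType) n d r (ray : 'I_d -> 'I_n -> int)
    (part : 'I_d -> 'I_r) (w : 'I_(d + r) -> R) (C : {set 'I_(d + r)}) : Prop :=
  exists psi : 'I_(n + r) -> R,
    (forall j, \sum_(k < n + r) psi k * (nu ray part j k)%:~R <= w j) /\
    (forall j, j \in C <-> \sum_(k < n + r) psi k * (nu ray part j k)%:~R = w j).

Definition reg_max_cell (R : realFieldType) n d r (ray : 'I_d -> 'I_n -> int)
    (part : 'I_d -> 'I_r) (w : 'I_(d + r) -> R) (C : {set 'I_(d + r)}) : Prop :=
  reg_cell ray part w C /\
  forall C', reg_cell ray part w C' -> C \subset C' -> C' = C.

Definition Tmax_cell d r (s : {set 'I_d}) : {set 'I_(d + r)} :=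
  [set j : 'I_(d + r) | match split j with inl p => p \in s | inr _ => true end].

Definition Tw_eq_Tmax (R : realFieldType) n d r (ray : 'I_d -> 'I_n -> int)
    (Sigma : {set {set 'I_d}}) (part : 'I_d -> 'I_r) (w : 'I_(d + r) -> R) : Prop :=
  forall C : {set 'I_(d + r)},
    reg_max_cell ray part w C <-> exists2 s, max_cone Sigma s & C = Tmax_cell r s.

Definition prim_coll d (Sigma : {set {set 'I_d}}) (P : {set 'I_d}) : Prop :=
  P \notin Sigma /\ forall Q : {set 'I_d}, Q \proper P -> Q \in Sigma.

Definition prim_rel n d (ray : 'I_d -> 'I_n -> int) (Sigma : {set {set 'I_d}})
    (P : {set 'I_d}) (l : 'I_d -> int) : Prop :=
  exists2 s, s \in Sigma &
  exists c : 'I_d -> int,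
    (forall p, p \in s -> 0 < c p) /\
    (forall k, \sum_(p in P) ray p k = \sum_(p in s) c p * ray p k) /\
    (forall p, l p = (p \in P)%:Z - (if p \in s then c p else 0)).

Definition posp (z : int) : nat := if 0 <= z then absz z else 0%N.
Definition negp (z : int) : nat := posp (- z).

Definition mpos k (l : 'I_k -> int) : 'X_{1..k} := [multinom posp (l i) | i < k].
Definition mneg k (l : 'I_k -> int) : 'X_{1..k} := [multinom negp (l i) | i < k].

Definition binom (F : fieldType) k (l : 'I_k -> int) : {mpoly F[k]} :=
  'X_[mpos l] - 'X_[mneg l].

Definition in_ideal (F : fieldType) k (S : {mpoly F[k]} -> Prop) (f : {mpoly F[k]}) : Prop :=
  exists s : seq ({mpoly F[k]} * {mpoly F[k]}),
    (forall x, x \in s -> S x.2) /\ f = \sum_(x <- s) x.1 * x.2.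

Definition toric_ideal (F : fieldType) n d r (ray : 'I_d -> 'I_n -> int)
    (part : 'I_d -> 'I_r) (f : {mpoly F[d + r]}) : Prop :=
  in_ideal (fun g => exists l, Lext ray part l /\ g = binom F l) f.

Definition mweight (R : realFieldType) k (w : 'I_k -> R) (m : 'X_{1..k}) : R :=
  \sum_(j < k) w j * (m j)%:R.

Definition init_form (R : realFieldType) (F : fieldType) k (w : 'I_k -> R)
    (f : {mpoly F[k]}) : {mpoly F[k]} :=
  \sum_(m <- msupp f | all (fun m' => mweight w m' <= mweight w m) (msupp f))
     f@_m *: 'X_[m].

Definition groebner (R : realFieldType) (F : fieldType) k (w : 'I_k -> R)
    (I G : {mpoly F[k]} -> Prop) : Prop :=
  (forall g, G g -> I g) /\
  (forall f, in_ideal (fun q => exists2 h, I h & q = init_form w h) f <->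
             in_ideal (fun q => exists2 g, G g & q = init_form w g) f).

Definition minimal_groebner (R : realFieldType) (F : fieldType) k (w : 'I_k -> R)
    (I G : {mpoly F[k]} -> Prop) : Prop :=
  groebner w I G /\
  (forall g, G g ->
     ~ in_ideal (fun q => exists h, [/\ G h, h <> g & q = init_form w h])
                (init_form w g)).

Definition prim_binomials (F : fieldType) n d r (ray : 'I_d -> 'I_n -> int)
    (Sigma : {set {set 'I_d}}) (part : 'I_d -> 'I_r) (g : {mpoly F[d + r]}) : Prop :=
  exists P l, [/\ prim_coll Sigma P, prim_rel ray Sigma P l & g = binom F (ext part l)].

Arguments toric_ideal F {n d r} ray part f.
Arguments prim_binomials F {n d r} ray Sigma part g.
Arguments binom F {k} l.
Arguments smooth_projective_fan R {n d} ray Sigma.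

From Pilot Require Import Defs.
From HB Require Import structures.
From mathcomp Require Import all_boot all_order all_algebra.
From mathcomp Require Import mpoly.
From mathcomp Require Import ring.
From Stdlib Require Import Classical.

Set Implicit Arguments.
Unset Strict Implicit.
Unset Printing Implicit Defensive.

Import Order.TTheory GRing.Theory Num.Theory.
Local Open Scope ring_scope.

(** Write [A] for the point configuration [nu_j] of the Cayley polytope of the
  nef-partition and [A u] for the [A]-degree of a monomial [y^u].  A monomial
  is _standard_ when its support lies in a maximal simplex of [T_max].

  - (fan combinatorics) every non-face of [Sigma] contains a primitive
    collection [P]; its primitive relation exists, is unique, and the cone
    [sigma] it involves is disjoint from [P] (Batyrev);
  - (standard monomials) since [T_w = T_max], every maximal simplex is a lower
    face of the lifted configuration; together with smoothness this shows that
    a standard monomial is the unique [w]-lightest monomial of its [A]-fibre;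
  - (primitive binomials) the nef condition bounds the coordinates [(i,0)] of
    [ext l(P)], so [y^{ext l(P)+}] divides every monomial whose support covers
    [P]; as [y^{ext l(P)-}] is standard, [in_w] of the binomial is [y^{ext l(P)+}].
  Hence a non-standard monomial can be rewritten into a strictly lighter one of
  the same fibre; iterating (fibres are finite) gives normal forms, which
  yields the generation statement.  Initial monomials of [I_A] are
  non-standard (an [A]-grading argument via the monomial map
  [y_j |-> x^{nu_j}], exponents shifted to be nonnegative), giving the Gröbner property; minimality follows from
  the uniqueness of primitive relations. *)

Section IdealMembership.
Variables (F : fieldType) (k : nat).
Implicit Types (S : {mpoly F[k]} -> Prop) (f g q : {mpoly F[k]}).

Lemma in_ideal0 S : in_ideal S 0.
Proof. by exists [::]; split => //; rewrite big_nil. Qed.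

Lemma in_idealD S f g : in_ideal S f -> in_ideal S g -> in_ideal S (f + g).
Proof.
move=> [s1 [H1 ->]] [s2 [H2 ->]]; exists (s1 ++ s2); split; last by rewrite big_cat.
by move=> x; rewrite mem_cat => /orP[/H1|/H2].
Qed.

Lemma in_idealMl S q f : in_ideal S f -> in_ideal S (q * f).
Proof.
move=> [s [H ->]]; exists [seq (q * x.1, x.2) | x <- s]; split.
  by move=> x /mapP [y ys ->]; exact: H ys.
by rewrite big_map mulr_sumr; apply: eq_bigr => x _; rewrite mulrA.
Qed.

Lemma in_ideal_gen S g : S g -> in_ideal S g.
Proof.
move=> Sg; exists [:: (1, g)]; split; last by rewrite big_seq1 mul1r.
by move=> x; rewrite inE => /eqP ->.
Qed.

Lemma in_idealZ S c f : in_ideal S f -> in_ideal S (c *: f).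
Proof. by rewrite -mul_mpolyC; apply: in_idealMl. Qed.

Lemma in_idealB S f g : in_ideal S f -> in_ideal S g -> in_ideal S (f - g).
Proof. by move=> Hf /(in_idealZ (-1)); rewrite scaleN1r; apply: in_idealD. Qed.

Lemma in_ideal_sum S (I : Type) (s : seq I) (P : pred I) (G : I -> {mpoly F[k]}) :
  (forall i, P i -> in_ideal S (G i)) -> in_ideal S (\sum_(i <- s | P i) G i).
Proof.
move=> H; elim: s => [|x s IH]; first by rewrite big_nil; apply: in_ideal0.
by rewrite big_cons; case: ifP => Px //; apply: in_idealD => //; apply: H.
Qed.

Lemma in_ideal_trans S1 S2 f :
  in_ideal S1 f -> (forall g, S1 g -> in_ideal S2 g) -> in_ideal S2 f.
Proof.
move=> [s [H ->]] H12; rewrite big_seq; apply: in_ideal_sum => x xs.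
exact/in_idealMl/H12/H.
Qed.

Lemma mcoeff_mulX_ndiv (q : {mpoly F[k]}) a b : ~~ (b <= a)%MM -> (q * 'X_[b])@_a = 0.
Proof.
move=> nba; rewrite {1}(mpolyE q) mulr_suml raddf_sum /=.
apply: big1 => m _; rewrite -scalerAl -mpolyXD mcoeffZ mcoeffX.
case: eqP => [e|_]; last by rewrite mulr0.
by move: nba; rewrite -e; case/negP; apply/mnm_lepP => j; rewrite mnmDE leq_addl.
Qed.

Lemma in_monomial_ideal (S : 'X_{1..k} -> Prop) (a : 'X_{1..k}) :
  in_ideal (fun q : {mpoly F[k]} => exists2 b, S b & q = 'X_[b]) 'X_[a] ->
  exists2 b, S b & (b <= a)%MM.
Proof.
move=> [s [Hs Ha]]; apply: NNPP => Hnd.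
have : ('X_[a] : {mpoly F[k]})@_a = 0.
  rewrite Ha raddf_sum /= big_seq big1 // => x xs.
  have [b Sb ->] := Hs x xs; apply: mcoeff_mulX_ndiv; apply/negP => ba.
  by apply: Hnd; exists b.
by rewrite mcoeffX eqxx => /eqP; rewrite oner_eq0.
Qed.

End IdealMembership.

Section InitialForms.
Variables (F : fieldType) (k : nat) (R : realFieldType) (w : 'I_k -> R).
Local Notation wt := (Defs.mweight w).

Lemma mweightD (a b : 'X_{1..k}) : wt (a + b)%MM = wt a + wt b.
Proof.
by rewrite /Defs.mweight -big_split; apply: eq_bigr => j _; rewrite mnmDE natrD mulrDr.
Qed.

Lemma init_form_single (f : {mpoly F[k]}) (m0 : 'X_{1..k}) : m0 \in msupp f ->
  (forall m, m \in msupp f -> m != m0 -> wt m < wt m0) ->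
  init_form w f = f@_m0 *: 'X_[m0].
Proof.
move=> Hm0 Hlt; rewrite /init_form big_mkcond (bigD1_seq m0) ?msupp_uniq //=.
have -> : all (fun m' => wt m' <= wt m0) (msupp f).
  apply/allP => m' Hm'; case: (eqVneq m' m0) => [->//|ne].
  exact: ltW (Hlt _ Hm' ne).
rewrite big1_seq ?addr0 // => m /andP[ne Hm]; case: ifP => // /allP /(_ _ Hm0).
by rewrite leNgt Hlt.
Qed.

Lemma init_form_binom (l : 'I_k -> int) :
  wt (mneg l) < wt (mpos l) -> init_form w (binom F l) = 'X_[mpos l].
Proof.
move=> Hlt; have ne : mneg l != mpos l by apply: contraTneq Hlt => ->; rewrite ltxx.
have coefE m : (binom F l)@_m = (mpos l == m)%:R - (mneg l == m)%:R.
  by rewrite /binom mcoeffB !mcoeffX.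
rewrite (@init_form_single _ (mpos l)).
- by rewrite coefE eqxx (negbTE ne) subr0 scale1r.
- by rewrite mcoeff_msupp coefE eqxx (negbTE ne) subr0 oner_neq0.
move=> m; rewrite mcoeff_msupp coefE => Hm nm.
rewrite [mpos l == m]eq_sym (negbTE nm) sub0r in Hm.
by case: (eqVneq (mneg l) m) Hm => [<- //|_]; rewrite oppr0 eqxx.
Qed.

End InitialForms.

Lemma posp_ge0 z : 0 <= z -> (posp z)%:Z = z.
Proof. by case: z. Qed.

Lemma posp_le0 z : z <= 0 -> posp z = 0%N.
Proof.
move=> zle; rewrite /posp; case: ifP => // z0.
by have -> : z = 0 by apply/eqP; rewrite eq_le zle z0.
Qed.

Lemma posp_negp z : (posp z)%:Z - (negp z)%:Z = z.
Proof.
rewrite /negp; case: (lerP 0 z) => z0.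
  by rewrite posp_ge0 // posp_le0 ?oppr_le0 // subr0.
by rewrite posp_le0 ?ltW // posp_ge0 ?oppr_ge0 ?ltW // sub0r opprK.
Qed.

Lemma mposE k (l : 'I_k -> int) j : mpos l j = posp (l j).
Proof. by rewrite mnmE. Qed.

Lemma mnegE k (l : 'I_k -> int) j : mneg l j = negp (l j).
Proof. by rewrite mnmE. Qed.

Section PrimitiveCollections.
Variables (R : realFieldType) (n d : nat).
Variables (ray : 'I_d -> 'I_n -> int) (Sigma : {set {set 'I_d}}).

Lemma cone_in_max_cone (s : {set 'I_d}) :
  s \in Sigma -> exists2 t, max_cone Sigma t & s \subset t.
Proof.
move=> Hs; pose S := [pred t : {set 'I_d} | (t \in Sigma) && (s \subset t)].
have S0 : S s by rewrite /S /= Hs subxx.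
case: (@arg_maxnP _ s S (fun t => #|t|) S0) => t /andP[tS st] Hmax.
exists t => //; split => // t' t'S tt'.
apply/eqP; rewrite eq_sym eqEcard tt' /=.
by apply: Hmax; rewrite /S /= t'S (subset_trans st tt').
Qed.

Lemma nonface_prim_coll (Q : {set 'I_d}) :
  Q \notin Sigma -> exists2 P, prim_coll Sigma P & P \subset Q.
Proof.
move=> HQ; pose S := [pred P : {set 'I_d} | (P \subset Q) && (P \notin Sigma)].
have SQ : S Q by rewrite /S /= subxx HQ.
case: (@arg_minnP _ Q S (fun P => #|P|) SQ) => P /andP[PQ PS] Hmin.
exists P => //; split => // Q' HQ'; apply/negPn/negP => nQ'.
have := Hmin Q'; rewrite /S /= nQ' andbT (subset_trans (proper_sub HQ') PQ).
by move=> /(_ isT); rewrite leqNgt proper_card.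
Qed.

Definition prel (P s : {set 'I_d}) (c : 'I_d -> int) (p : 'I_d) : int :=
  (p \in P)%:Z - (if p \in s then c p else 0).

Lemma cone_sum_int (t : {set 'I_d}) (c : 'I_d -> int) k :
  \sum_(p < d) (if p \in t then c p else 0)%:~R * (ray p k)%:~R
  = (\sum_(p in t) c p * ray p k)%:~R :> R.
Proof.
rewrite rmorph_sum [RHS]big_mkcond /=; apply: eq_bigr => p _.
by case: ifP => _; rewrite ?rmorphM // mul0r.
Qed.

Lemma prel_ray (P s : {set 'I_d}) (c : 'I_d -> int) k :
  \sum_(p in P) ray p k = \sum_(p in s) c p * ray p k ->
  \sum_(p < d) prel P s c p * ray p k = 0.
Proof.
move=> H; rewrite /prel; under eq_bigr do rewrite mulrBl.
rewrite sumrB; apply/eqP; rewrite subr_eq0; apply/eqP.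
rewrite (big_mkcond (fun p => p \in P)) (big_mkcond (fun p => p \in s)) in H.
rewrite (eq_bigr (fun p => if p \in P then ray p k else 0)); last first.
  by move=> p _; case: (p \in P); rewrite ?mul1r ?mul0r.
by rewrite H; apply: eq_bigr => p _; case: (p \in s); rewrite ?mul0r.
Qed.

Lemma prim_rel_data (P : {set 'I_d}) l : prim_rel ray Sigma P l ->
  exists2 s, s \in Sigma & exists c : 'I_d -> int,
    [/\ forall p, p \in s -> 0 < c p,
        forall k, \sum_(p < d) l p * ray p k = 0 & forall p, l p = prel P s c p].
Proof.
case=> s Hs [c [Hc [Hsum Hl]]]; exists s => //; exists c; split => // k.
by rewrite -[RHS](prel_ray (Hsum k)); apply: eq_bigr => p _; rewrite Hl.
Qed.

Hypothesis fanH : smooth_projective_fan R ray Sigma.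

Lemma cone_coord_unique (t : {set 'I_d}) (a b : 'I_d -> R) : t \in Sigma ->
  (forall p, p \notin t -> a p = 0) -> (forall p, p \notin t -> b p = 0) ->
  (forall k, \sum_(p < d) a p * (ray p k)%:~R = \sum_(p < d) b p * (ray p k)%:~R) ->
  forall p, a p = b p.
Proof.
move=> Ht Ha Hb Hab p; have [indep _] := fanH.2.2.2.1 t Ht.
apply/eqP; rewrite -subr_eq0; apply/eqP.
apply: (indep (fun p => a p - b p)) => [q qt|k]; first by rewrite Ha ?Hb ?subr0.
by under eq_bigr do rewrite mulrBl; rewrite sumrB Hab subrr.
Qed.

(** Existence: [sum_P rho_p] lies in some cone, with integral coefficients
    (smoothness), and the rays with positive coefficient span a face. *)
Lemma prim_rel_exists (P : {set 'I_d}) : exists l, prim_rel ray Sigma P l.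
Proof.
have [s Hs [a [a0 [aoff ax]]]] := fanH.2.2.2.2.1 (fun k => \sum_(p in P) (ray p k)%:~R).
have [_ integ] := fanH.2.2.2.1 s Hs.
have [c Hc] : exists c : 'I_d -> int, forall p, a p = (c p)%:~R.
  apply: (@fin_all_exists _ (fun _ => int) (fun p z => a p = z%:~R)).
  by apply: integ => // k; exists (\sum_(p in P) ray p k); rewrite -ax rmorph_sum.
have c0 p : 0 <= c p by rewrite -(ler0z R) -Hc.
pose s' := [set p in s | 0 < c p].
have coff p : p \notin s' -> c p = 0.
  rewrite inE negb_and => /orP[/aoff|].
    by rewrite Hc => /eqP; rewrite intr_eq0 => /eqP.
  by rewrite -leNgt => cp; apply/eqP; rewrite eq_le cp c0.
exists (prel P s' c); exists s'.
  by apply: (fanH.2.1 s) => //; apply/subsetP => p; rewrite inE => /andP[].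
exists c; split; first by move=> p; rewrite inE => /andP[].
split => // k; apply: (@intr_inj R); rewrite -cone_sum_int.
have -> : (\sum_(p in P) ray p k)%:~R = \sum_(p < d) a p * (ray p k)%:~R :> R.
  by rewrite rmorph_sum; exact: ax k.
by apply: eq_bigr => p _; case: ifP => ps'; rewrite Hc // coff ?ps'.
Qed.

(** Uniqueness: two cones containing [sum_P rho_p] in their relative
    interiors meet in a common face, in which coordinates are unique. *)
Lemma prim_rel_unique (P : {set 'I_d}) l1 l2 :
  prim_rel ray Sigma P l1 -> prim_rel ray Sigma P l2 -> forall p, l1 p = l2 p.
Proof.
move=> [s1 Hs1 [c1 [Hc1 [Hk1 el1]]]] [s2 Hs2 [c2 [Hc2 [Hk2 el2]]]].
pose x k : R := (\sum_(p in P) ray p k)%:~R.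
pose coord (s : {set 'I_d}) (c : 'I_d -> int) p : R := (if p \in s then c p else 0)%:~R.
have coord_cone (s : {set 'I_d}) (c : 'I_d -> int) : (forall p, p \in s -> 0 < c p) ->
    (forall k, \sum_(p in P) ray p k = \sum_(p in s) c p * ray p k) ->
    in_cone ray s x.
  move=> Hc Hk; exists (coord s c); split.
    by move=> p; rewrite /coord; case: ifP => // ps; rewrite ler0z ltW ?Hc.
  split; first by move=> p /negbTE ps; rewrite /coord ps.
  by move=> k; rewrite /x Hk cone_sum_int.
have [b [_ [boff bx]]] :=
  fanH.2.2.1 s1 s2 Hs1 Hs2 x (coord_cone _ _ Hc1 Hk1) (coord_cone _ _ Hc2 Hk2).
have coordE (s : {set 'I_d}) (c : 'I_d -> int) (Hs : s \in Sigma) :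
    (forall k, \sum_(p in P) ray p k = \sum_(p in s) c p * ray p k) ->
    (forall p, p \notin s -> b p = 0) -> forall p, coord s c p = b p.
  move=> Hk Hb; apply: (cone_coord_unique Hs) => [p /negbTE ps|//|k].
    by rewrite /coord ps.
  by rewrite cone_sum_int -Hk -bx.
have e1 : forall p, coord s1 c1 p = b p.
  by apply: coordE Hs1 Hk1 _ => p ps; rewrite boff // inE negb_and ps.
have e2 : forall p, coord s2 c2 p = b p.
  by apply: coordE Hs2 Hk2 _ => p ps; rewrite boff // inE negb_and ps orbT.
move=> p; rewrite el1 el2; congr (_ - _); apply: (@intr_inj R).
by have := e1 p; rewrite -e2.
Qed.

(** Batyrev: the cone of the primitive relation of [P] is disjoint from [P].
    Otherwise, for [p0] in both, [sum_{P - p0} rho] lies in the two cones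
    [P - p0] and [sigma], forcing [P] into a face of [sigma]. *)
Lemma prim_rel_disjoint (P : {set 'I_d}) l :
  prim_coll Sigma P -> prim_rel ray Sigma P l ->
  exists2 s, s \in Sigma & exists c : 'I_d -> int,
    [/\ forall p, p \in s -> 0 < c p, forall p, l p = prel P s c p
      & forall p, p \in P -> p \notin s].
Proof.
move=> [PnS Pmin] [s Hs [c [Hc [Hk el]]]]; exists s => //; exists c; split => //.
move=> p0 p0P; apply/negP => p0s.
pose Q := P :\ p0.
have QS : Q \in Sigma.
  apply: Pmin; rewrite properEneq subD1set andbT; apply/negP => /eqP QP.
  by move: p0P; rewrite -QP !inE eqxx.
pose y k : R := (\sum_(p in Q) ray p k)%:~R.
pose aQ p : R := (p \in Q)%:R.
pose a' p : R := (if p \in s then c p else 0)%:~R - (p == p0)%:R.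
have hQ k : y k = \sum_(p < d) aQ p * (ray p k)%:~R.
  rewrite /y rmorph_sum [LHS]big_mkcond /=; apply: eq_bigr => p _.
  by rewrite /aQ; case: (p \in Q); rewrite ?mul1r ?mul0r.
have coneQ : in_cone ray Q y.
  exists aQ; split; first by move=> p; rewrite /aQ ler0n.
  by split; first by move=> p /negbTE pQ; rewrite /aQ pQ.
have cones : in_cone ray s y.
  exists a'; split.
    move=> p; rewrite /a'; case: (eqVneq p p0) => [->|ne].
      by rewrite p0s subr_ge0 -(mulrz_nat 1 1) ler_int; have := Hc p0 p0s.
    by rewrite subr0; case: ifP => // ps; rewrite ler0z ltW ?Hc.
  split.
    move=> p ps; rewrite /a' (negbTE ps); case: (eqVneq p p0) => [e|_].
      by move: ps; rewrite e p0s.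
    by rewrite subr0.
  move=> k; rewrite /y /a'; apply/esym.
  under eq_bigr do rewrite mulrBl.
  rewrite sumrB cone_sum_int -Hk (bigD1 p0) //= rmorphD.
  have z : \sum_(i < d | i != p0) (i == p0)%:R * (ray i k)%:~R = 0 :> R.
    by apply: big1 => i /negbTE ->; rewrite mul0r.
  rewrite [X in _ - X](bigD1 p0) //= eqxx mul1r z addr0.
  rewrite addrAC subrr add0r; congr (_%:~R); apply: eq_bigl => p.
  by rewrite !inE andbC.
have [b [_ [boff bx]]] := fanH.2.2.1 Q s QS Hs y coneQ cones.
have eb : forall p, aQ p = b p.
  apply: (cone_coord_unique QS) => [p /negbTE pQ|p pQ|k]; first by rewrite /aQ pQ.
    by rewrite boff // inE negb_and pQ.
  by rewrite -bx hQ.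
move: PnS; apply/negP/negPn; apply: (fanH.2.1 s) => //.
apply/subsetP => p pP; case: (eqVneq p p0) => [->//|ne].
have pQ : p \in Q by rewrite !inE ne pP.
apply/negPn/negP => ps; have := eb p; rewrite boff ?inE ?negb_and ?ps ?orbT //.
by rewrite /aQ pQ => /eqP; rewrite oner_eq0.
Qed.

End PrimitiveCollections.

Section CayleyConfiguration.
Variables (R : realFieldType) (n d r : nat).
Variables (ray : 'I_d -> 'I_n -> int) (Sigma : {set {set 'I_d}}) (part : 'I_d -> 'I_r).

Local Notation nu := (nu ray part).

Lemma nu_ll p k : nu (lshift r p) (lshift r k) = ray p k.
Proof. by rewrite /Defs.nu !(unsplitK (inl _)). Qed.
Lemma nu_lr p i : nu (lshift r p) (rshift n i) = (part p == i)%:Z.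
Proof. by rewrite /Defs.nu (unsplitK (inl _)) (unsplitK (inr _)). Qed.
Lemma nu_rl i k : nu (rshift d i) (lshift r k) = 0.
Proof. by rewrite /Defs.nu (unsplitK (inr _)) (unsplitK (inl _)). Qed.
Lemma nu_rr i i' : nu (rshift d i) (rshift n i') = (i == i')%:Z.
Proof. by rewrite /Defs.nu !(unsplitK (inr _)). Qed.

Lemma ext_l (l : 'I_d -> int) p : ext part l (lshift r p) = l p.
Proof. by rewrite /ext (unsplitK (inl _)). Qed.
Lemma ext_r (l : 'I_d -> int) i :
  ext part l (rshift d i) = - \sum_(p < d | part p == i) l p.
Proof. by rewrite /ext (unsplitK (inr _)). Qed.

Lemma in_Tmax_l (s : {set 'I_d}) p : (lshift r p \in Tmax_cell r s) = (p \in s).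
Proof. by rewrite inE (unsplitK (inl _)). Qed.
Lemma in_Tmax_r (s : {set 'I_d}) i : rshift d i \in Tmax_cell r s.
Proof. by rewrite inE (unsplitK (inr _)). Qed.

Lemma sum_nu_r j : \sum_(i < r) nu j (rshift n i) = 1.
Proof.
case: (split_ordP j) => [p ->|i0 ->].
  rewrite (bigD1 (part p)) //= nu_lr eqxx big1 ?addr0 // => i ne.
  by rewrite nu_lr eq_sym (negbTE ne).
rewrite (bigD1 i0) //= nu_rr eqxx big1 ?addr0 // => i ne.
by rewrite nu_rr eq_sym (negbTE ne).
Qed.

Definition Adeg (u : 'X_{1..d + r}) (kk : 'I_(n + r)) : int :=
  \sum_(j < d + r) (u j)%:Z * nu j kk.

Lemma Adeg_mdeg u : (mdeg u)%:Z = \sum_(i < r) Adeg u (rshift n i).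
Proof.
rewrite /Adeg exchange_big mdegE raddf_sum /=; apply: eq_bigr => j _.
by rewrite -mulr_sumr sum_nu_r mulr1.
Qed.

Lemma Lext_Adeg (l : 'I_(d + r) -> int) : Lext ray part l ->
  forall kk, Adeg (mpos l) kk = Adeg (mneg l) kk.
Proof.
move=> Hl kk; apply/eqP; rewrite -subr_eq0 /Adeg -sumrB; apply/eqP.
rewrite -[RHS](Hl kk); apply: eq_bigr => j _.
by rewrite mposE mnegE -mulrBl posp_negp.
Qed.

Definition supp_in (u : 'X_{1..d + r}) (C : {set 'I_(d + r)}) :=
  forall j, (u j != 0)%N -> j \in C.

Hypothesis fanH : smooth_projective_fan R ray Sigma.

Lemma Tmax_cell_indep (s : {set 'I_d}) (de : 'I_(d + r) -> int) :
  s \in Sigma -> (forall j, j \notin Tmax_cell r s -> de j = 0) ->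
  (forall kk, \sum_(j < d + r) de j * nu j kk = 0) -> forall j, de j = 0.
Proof.
move=> Hs Hsup Hker; have [indep _] := fanH.2.2.2.1 s Hs.
have Hl p : de (lshift r p) = 0.
  apply/eqP; rewrite -(intr_eq0 R); apply/eqP.
  apply: (indep (fun p => (de (lshift r p))%:~R)) => [q qs|k].
    by rewrite Hsup ?in_Tmax_l.
  have := Hker (lshift r k); rewrite big_split_ord /=.
  rewrite [X in _ + X]big1 ?addr0 => [H|i _]; last by rewrite nu_rl mulr0.
  transitivity ((\sum_(q < d) de (lshift r q) * nu (lshift r q) (lshift r k))%:~R : R).
    by rewrite rmorph_sum; apply: eq_bigr => q _; rewrite nu_ll rmorphM.
  by rewrite H.
move=> j; case: (split_ordP j) => [p ->|i ->] //.
have := Hker (rshift n i); rewrite big_split_ord /= big1 => [|q _]; last first.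
  by rewrite Hl mul0r.
rewrite add0r (bigD1 i) //= nu_rr eqxx mulr1 big1 ?addr0 //.
by move=> i' /negbTE ne; rewrite nu_rr ne mulr0.
Qed.

Lemma prim_rel_Lext (P : {set 'I_d}) l :
  prim_rel ray Sigma P l -> Lext ray part (ext part l).
Proof.
case/prim_rel_data => s Hs [c [Hc Hk el]] kk; rewrite big_split_ord /=.
case: (split_ordP kk) => [k ->|i ->].
  rewrite [X in _ + X]big1 ?addr0 => [|i _]; last by rewrite nu_rl mulr0.
  by rewrite -[RHS](Hk k); apply: eq_bigr => p _; rewrite ext_l nu_ll.
rewrite (bigD1 i) //= ext_r nu_rr eqxx mulr1.
rewrite [X in _ + (_ + X)]big1 ?addr0 => [|i' /negbTE ne]; last first.
  by rewrite nu_rr ne mulr0.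
apply/eqP; rewrite subr_eq0; apply/eqP; rewrite [RHS]big_mkcond /=.
apply: eq_bigr => p _.
by rewrite ext_l nu_lr; case: (part p == i); rewrite ?mulr1 ?mulr0.
Qed.

Hypothesis nefH : nef_partition ray Sigma part.

(** Nefness of [E_i]: pairing the relation [l(P)] with the support function
    of [E_i] on a maximal cone containing its cone gives
    [sum_{p in I_i} l_p >= 0], i.e. [ext l(P)] is [<= 0] at [(i,0)]. *)
Lemma prim_rel_part_sum_ge0 (P : {set 'I_d}) l : prim_rel ray Sigma P l ->
  forall i, 0 <= \sum_(p < d | part p == i) l p.
Proof.
case/prim_rel_data => s Hs [c [Hc Hk el]] i.
case: (cone_in_max_cone Hs) => t tmax st.
have [m Hm] := (nefH i).2 t tmax.
have H0 : \sum_(p < d) l p * pairing m (ray p) = 0.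
  rewrite /pairing; under eq_bigr do rewrite mulr_sumr.
  rewrite exchange_big /=; apply: big1 => k _.
  under eq_bigr do rewrite mulrCA.
  by rewrite -mulr_sumr Hk mulr0.
have Hle : \sum_(p < d) l p * (- (part p == i)%:Z)
           <= \sum_(p < d) l p * pairing m (ray p).
  apply: ler_sum => p _; case: (boolP (p \in t)) => pt; first by rewrite (Hm p).1.
  have lp0 : 0 <= l p.
    rewrite el /prel.
    have -> : (p \in s) = false by apply: contraNF pt; apply: (subsetP st).
    by rewrite subr0; case: (p \in P).
  by rewrite ler_wpM2l // (Hm p).2.
move: Hle; rewrite H0; under eq_bigr do rewrite mulrN.
rewrite sumrN oppr_le0 [X in _ -> _ <= X]big_mkcond /=.
by congr (_ <= _); apply: eq_bigr => p _; case: (part p == i); rewrite ?mulr1 ?mulr0.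
Qed.

Lemma prim_rel_pos_le (P : {set 'I_d}) l (u : 'X_{1..d + r}) :
  prim_rel ray Sigma P l ->
  (forall p, p \in P -> u (lshift r p) != 0%N) -> (mpos (ext part l) <= u)%MM.
Proof.
move=> Hpr HP; apply/mnm_lepP => j; have Hnef := prim_rel_part_sum_ge0 Hpr.
case/prim_rel_data: Hpr => s Hs [c [Hc Hk el]].
case: (split_ordP j) => [p ->|i ->]; rewrite mposE; last first.
  by rewrite ext_r posp_le0 // oppr_le0 Hnef.
rewrite ext_l el /prel; case: (boolP (p \in P)) => pP; last first.
  rewrite posp_le0 // sub0r oppr_le0; case: ifP => // ps.
  exact: ltW (Hc p ps).
case: (boolP (p \in s)) => ps; last by rewrite subr0 /posp /= lt0n HP.
by rewrite posp_le0 // subr_le0; have := Hc p ps.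
Qed.

End CayleyConfiguration.

Section AdegreeFibres.
Variables (F : fieldType) (n d r : nat).
Variables (ray : 'I_d -> 'I_n -> int) (part : 'I_d -> 'I_r).

Local Notation nu := (nu ray part).
Local Notation Adeg := (Adeg ray part).

(** A bound for the coordinates of the rays, and the indicator of [N] in
    [N x Z^r]; adding [Mray] to the [N]-coordinates makes every [nu_j]
    nonnegative. *)
Definition Mray : int := \sum_(p < d) \sum_(k < n) `|ray p k|.
Definition on_N (kk : 'I_(n + r)) : int := (kk < n)%N%:Z.

Lemma Mray_ge p k : `|ray p k| <= Mray.
Proof.
rewrite /Mray (bigD1 p) //= (bigD1 k) //= -addrA lerDl.
by rewrite addr_ge0 //; apply: sumr_ge0 => *; rewrite ?normr_ge0 //; apply: sumr_ge0.
Qed.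

Lemma nu_shift_ge0 j kk : 0 <= nu j kk + Mray * on_N kk.
Proof.
have on_N_r i : on_N (rshift n i) = 0 by rewrite /on_N /= ltnNge leq_addr.
have on_N_l k : on_N (lshift r k) = 1 by rewrite /on_N /= ltn_ord.
case: (split_ordP j) => [p ->|i ->]; case: (split_ordP kk) => [k ->|i' ->];
  rewrite ?on_N_l ?on_N_r ?mulr0 ?addr0 ?mulr1.
- rewrite nu_ll -lerBlDr sub0r lerNl; apply: le_trans (Mray_ge p k).
  by rewrite -normrN ler_norm.
- by rewrite nu_lr.
- by rewrite nu_rl add0r; apply: sumr_ge0 => p _; apply: sumr_ge0.
- by rewrite nu_rr.
Qed.

Definition nu_shift (j : 'I_(d + r)) : 'X_{1..n + r} :=
  [multinom absz (nu j kk + Mray * on_N kk)%R | kk < n + r].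

Definition Akey (u : 'X_{1..d + r}) : 'X_{1..n + r} :=
  [multinom (\sum_(j < d + r) u j * nu_shift j kk)%N | kk < n + r].

Lemma AkeyE u kk : (Akey u kk)%:Z = Adeg u kk + Mray * on_N kk * (mdeg u)%:Z.
Proof.
rewrite mnmE raddf_sum mdegE raddf_sum mulr_sumr /Adeg -big_split /=.
apply: eq_bigr => j _; rewrite PoszM mnmE abszE ger0_norm ?nu_shift_ge0 //; ring.
Qed.

(** [Akey] is a faithful encoding of the [A]-degree, since the degree of a
    monomial is read off its [A]-degree on the [Z^r] factor. *)
Lemma Akey_eqP u v : Akey u = Akey v <-> forall kk, Adeg u kk = Adeg v kk.
Proof.
have on_N_r i : on_N (rshift n i) = 0 by rewrite /on_N /= ltnNge leq_addr.
have degE : (forall i, Adeg u (rshift n i) = Adeg v (rshift n i)) -> mdeg u = mdeg v.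
  move=> H; apply/eqP; rewrite -eqz_nat !(Adeg_mdeg ray part); apply/eqP.
  by apply: eq_bigr => i _; rewrite H.
split => [e|H].
  have Hr i : Adeg u (rshift n i) = Adeg v (rshift n i).
    by have := AkeyE u (rshift n i); rewrite e AkeyE on_N_r !mulr0 mul0r !addr0.
  by move=> kk; have := AkeyE u kk; rewrite e AkeyE (degE Hr) => /addIr.
apply/mnmP => kk; apply/eqP; rewrite -eqz_nat !AkeyE H (degE (fun i => H _)).
by [].
Qed.

Lemma AkeyD a b : Akey (a + b)%MM = (Akey a + Akey b)%MM.
Proof.
apply/mnmP => kk; rewrite mnmDE !mnmE -big_split /=.
by apply: eq_bigr => j _; rewrite mnmDE mulnDl.
Qed.

Lemma Akey_mdeg u v : Akey u = Akey v -> mdeg u = mdeg v.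
Proof.
move/Akey_eqP => H; apply/eqP; rewrite -eqz_nat !(Adeg_mdeg ray part); apply/eqP.
by apply: eq_bigr => i _; exact: H.
Qed.

Definition Amap : {mpoly F[d + r]} -> {mpoly F[n + r]} :=
  mmap (@mpolyC (n + r) F) (fun j => 'X_[nu_shift j]).

Lemma mmap1_Akey m : mmap1 (fun j => 'X_[nu_shift j]) m = 'X_[Akey m] :> {mpoly F[n + r]}.
Proof.
rewrite /mmap1 mprodXnE; congr mpolyX; apply/mnmP => kk.
by rewrite mnm_sumE mnmE; apply: eq_bigr => j _; rewrite mulmnE mulnC.
Qed.

Lemma AmapM x y : Amap (x * y) = Amap x * Amap y.
Proof. exact: (mmap_is_multiplicative _ (@mpolyC (n + r) F)).1. Qed.

Lemma Amap_X m : Amap 'X_[m] = 'X_[Akey m].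
Proof. by rewrite /Amap mmapX mmap1_Akey. Qed.

Lemma Amap_coeff h c : (Amap h)@_c = \sum_(m <- msupp h | Akey m == c) h@_m.
Proof.
rewrite /Amap /mmap raddf_sum [RHS]big_mkcond /=.
apply: eq_bigr => m _; rewrite mmap1_Akey.
by rewrite mcoeffCM mcoeffX; case: (Akey m == c); rewrite ?mulr1 ?mulr0.
Qed.

Lemma Amap_toric h : toric_ideal F ray part h -> Amap h = 0.
Proof.
move=> [s [Hs ->]].
rewrite (big_morph Amap (@mmapD _ _ _ _ _) (mmap0 _ _)) big_seq big1 // => x xs.
have [l [Hl ->]] := Hs x xs.
rewrite AmapM /binom /Amap mmapB -/Amap !Amap_X.
by rewrite (proj2 (Akey_eqP _ _) (Lext_Adeg Hl)) subrr mulr0.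
Qed.

End AdegreeFibres.

Section StandardMonomials.
Variables (R : realFieldType) (F : fieldType) (n d r : nat).
Variables (ray : 'I_d -> 'I_n -> int) (Sigma : {set {set 'I_d}}) (part : 'I_d -> 'I_r).
Hypothesis fanH : smooth_projective_fan R ray Sigma.
Hypothesis nefH : nef_partition ray Sigma part.
Variable w : 'I_(d + r) -> R.
Hypothesis TwH : Tw_eq_Tmax ray Sigma part w.

Local Notation nu := (nu ray part).
Local Notation Adeg := (Adeg ray part).
Local Notation Akey := (Akey ray part).
Local Notation wt := (Defs.mweight w).
Local Notation Gs := (prim_binomials F ray Sigma part).

Definition standard (u : 'X_{1..d + r}) : Prop :=
  exists2 s, max_cone Sigma s & supp_in u (Tmax_cell r s).

Lemma Tmax_supp_Adeg_inj (s : {set 'I_d}) (u v : 'X_{1..d + r}) : s \in Sigma ->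
  supp_in u (Tmax_cell r s) -> supp_in v (Tmax_cell r s) ->
  (forall kk, Adeg u kk = Adeg v kk) -> u = v.
Proof.
move=> Hs Hu Hv Huv; apply/mnmP => j; apply/eqP; rewrite -eqz_nat -subr_eq0.
apply/eqP/(Tmax_cell_indep (part := part) fanH Hs (de := fun j => (u j)%:Z - (v j)%:Z)).
- move=> j' nj'.
  have -> : u j' = 0%N by apply/eqP; apply: contraR nj' => /Hu.
  by have -> : v j' = 0%N by apply/eqP; apply: contraR nj' => /Hv.
- move=> kk; have := Huv kk; rewrite /Adeg => e.
  by under eq_bigr do rewrite mulrBl; rewrite sumrB e subrr.
Qed.

Definition lift (psi : 'I_(n + r) -> R) (j : 'I_(d + r)) : R :=
  \sum_(kk < n + r) psi kk * (nu j kk)%:~R.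

Lemma weight_excess (psi : 'I_(n + r) -> R) (u : 'X_{1..d + r}) :
  wt u - \sum_(kk < n + r) psi kk * (Adeg u kk)%:~R
  = \sum_(j < d + r) (w j - lift psi j) * (u j)%:R.
Proof.
have -> : \sum_(kk < n + r) psi kk * (Adeg u kk)%:~R
          = \sum_(j < d + r) lift psi j * (u j)%:R.
  rewrite /lift; under [RHS]eq_bigr do rewrite mulr_suml.
  rewrite [RHS]exchange_big /=; apply: eq_bigr => kk _.
  rewrite rmorph_sum mulr_sumr; apply: eq_bigr => j _.
  by rewrite rmorphM /= -pmulrn; ring.
by rewrite /Defs.mweight -sumrB; apply: eq_bigr => j _; rewrite mulrBl.
Qed.

(** The simplex is a lower
    face, cut out by a form [psi] with [psi(nu_j) <= w_j], with equality
    exactly on the simplex. *)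
Lemma Tmax_supp_min (s : {set 'I_d}) (u v : 'X_{1..d + r}) :
  max_cone Sigma s -> supp_in u (Tmax_cell r s) ->
  (forall kk, Adeg u kk = Adeg v kk) ->
  wt u <= wt v /\ (wt v <= wt u -> v = u).
Proof.
move=> Hs Hu Huv.
have [[psi [Hle Hiff]] _] := (TwH (Tmax_cell r s)).2 (ex_intro2 _ _ s Hs erefl).
have Hge (m : 'X_{1..d + r}) j : 0 <= (w j - lift psi j) * (m j)%:R.
  by rewrite mulr_ge0 ?ler0n // subr_ge0 Hle.
pose h := \sum_(kk < n + r) psi kk * (Adeg u kk)%:~R.
have hv : h = \sum_(kk < n + r) psi kk * (Adeg v kk)%:~R.
  by apply: eq_bigr => kk _; rewrite Huv.
have wu : wt u = h.
  apply/eqP; rewrite -subr_eq0 weight_excess; apply/eqP/big1 => j _.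
  case: (eqVneq (u j) 0%N) => [->|/Hu /Hiff e]; first by rewrite mulr0.
  by rewrite /lift e subrr mul0r.
have hle : h <= wt v by rewrite -subr_ge0 hv weight_excess sumr_ge0.
split=> [|Hvu]; first by rewrite wu.
have H0 : \sum_(j < d + r) (w j - lift psi j) * (v j)%:R = 0.
  by apply/eqP; rewrite eq_le sumr_ge0 // andbT -weight_excess -hv subr_le0 -wu.
apply: (Tmax_supp_Adeg_inj Hs.1 _ Hu) => [j vj|kk]; last by rewrite Huv.
apply/Hiff/eqP; rewrite eq_sym -subr_eq0.
have /eqP := @psumr_eq0P R _ predT _ (fun j _ => Hge v j) H0 j isT.
by rewrite mulf_eq0 pnatr_eq0 (negbTE vj) orbF.
Qed.

Lemma standard_unique u v : standard u -> standard v -> Akey u = Akey v -> u = v.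
Proof.
move=> [s1 h1 H1] [s2 h2 H2] /Akey_eqP e.
by apply/esym/(Tmax_supp_min h1 H1 e).2/(Tmax_supp_min h2 H2 (fun kk => esym (e kk))).1.
Qed.

(** For a primitive collection, the initial monomial of the primitive binomial
    is [y^{ext l(P)+}]: [y^{ext l(P)-}] is supported on the simplex of the cone
    of the relation, so it is strictly lighter (they differ since [P] is not
    a cone). *)
Lemma prim_binom_lt (P : {set 'I_d}) l : prim_coll Sigma P -> prim_rel ray Sigma P l ->
  wt (mneg (ext part l)) < wt (mpos (ext part l)).
Proof.
move=> [PnS _] Hpr; have HL := prim_rel_Lext part Hpr.
case/prim_rel_data: Hpr => s Hs [c [Hc Hk el]].
case: (cone_in_max_cone Hs) => t tmax st.
have Hsupp : supp_in (mneg (ext part l)) (Tmax_cell r t).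
  move=> j; case: (split_ordP j) => [p ->|i ->]; last by rewrite in_Tmax_r.
  rewrite mnegE ext_l in_Tmax_l el /prel /negp => H; apply: (subsetP st).
  by apply: contraLR H => /negbTE ->; rewrite subr0; case: (p \in P).
have [le1 le2] := Tmax_supp_min tmax Hsupp (fun kk => esym (Lext_Adeg HL kk)).
rewrite lt_neqAle le1 andbT; apply/negP => /eqP e.
have l0 p : l p = 0.
  have := posp_negp (ext part l (lshift r p)).
  by rewrite -mposE -mnegE (le2 _) ?e // subrr ext_l.
move: PnS; suff -> : P = s by rewrite Hs.
apply/setP => p; have := l0 p; rewrite el /prel.
case: (boolP (p \in s)) => ps; case: (p \in P) => //=.
by move/eqP; rewrite sub0r oppr_eq0 => /eqP cp; have := Hc p ps; rewrite cp ltxx.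
Qed.

Lemma nonstandard_divisible (u : 'X_{1..d + r}) : ~ standard u -> exists P l,
  [/\ prim_coll Sigma P, prim_rel ray Sigma P l & (mpos (ext part l) <= u)%MM].
Proof.
move=> Hns; pose Q := [set p | u (lshift r p) != 0%N].
have HQ : Q \notin Sigma.
  apply/negP => /cone_in_max_cone [t tmax Qt]; apply: Hns; exists t => // j.
  case: (split_ordP j) => [p ->|i ->]; last by rewrite in_Tmax_r.
  by move=> up; rewrite in_Tmax_l (subsetP Qt) // inE.
have [P HP PQ] := nonface_prim_coll HQ.
have [l Hl] := prim_rel_exists fanH P.
exists P, l; split => //; apply: (prim_rel_pos_le nefH) Hl _ => p pP.
by have := subsetP PQ p pP; rewrite inE.
Qed.

(** Monomials of maximal weight in an element of [I_A] are non-standard: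
    otherwise it would be alone in its [A]-fibre within the support, whereas
    coefficients of [I_A] sum to zero over each fibre. *)
Lemma toric_heaviest_nonstandard h m0 : toric_ideal F ray part h -> m0 \in msupp h ->
  (forall m, m \in msupp h -> wt m <= wt m0) -> ~ standard m0.
Proof.
move=> Hh Hm0 Hmax [s smax Hs].
have := Amap_coeff ray part h (Akey m0); rewrite Amap_toric // mcoeff0.
rewrite big_mkcond (bigD1_seq m0) ?msupp_uniq //= eqxx big1_seq.
  by rewrite addr0 => /esym/eqP; rewrite mcoeff_eq0 Hm0.
move=> m /andP[nm Hm]; case: eqP => // /Akey_eqP ke.
have [_ le2] := Tmax_supp_min smax Hs (fun kk => esym (ke kk)).
by move: nm; rewrite (le2 (Hmax m Hm)) eqxx.
Qed.

Lemma prim_binomial_toric g : Gs g -> toric_ideal F ray part g.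
Proof.
move=> [P [l [_ Hl ->]]]; apply: in_ideal_gen; exists (ext part l); split => //.
exact (prim_rel_Lext part Hl).
Qed.

Lemma reduce_step u : ~ standard u -> exists u',
  [/\ Akey u' = Akey u, wt u' < wt u & in_ideal Gs ('X_[u] - 'X_[u'])].
Proof.
move=> Hns; have [P [l [HP Hl ale]]] := nonstandard_divisible Hns.
set a := mpos (ext part l); set b := mneg (ext part l).
have kab : Akey a = Akey b by apply/Akey_eqP/Lext_Adeg/(prim_rel_Lext part Hl).
exists ((u - a) + b)%MM; split.
- by rewrite AkeyD -kab -AkeyD submK.
- by rewrite -{2}(submK ale) !mweightD ltrD2l; exact: prim_binom_lt HP Hl.
- have -> : 'X_[u] - 'X_[(u - a + b)%MM] = 'X_[(u - a)%MM] * binom F (ext part l).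
    by rewrite /binom mulrBr -!mpolyXD submK.
  by apply/in_idealMl/in_ideal_gen; exists P, l.
Qed.

(** The number of lighter monomials in the fibre of [u] (all of degree
    [< D.+1]); it decreases along reduction steps. *)
Definition lighter_in_fibre D (u : 'X_{1..d + r}) : nat :=
  #|[set v : bmultinom (d + r) D.+1 | (Akey v == Akey u) && (wt v < wt u)]|.

Lemma lighter_in_fibre_lt D u u' : (mdeg u' <= D)%N -> Akey u' = Akey u ->
  wt u' < wt u -> (lighter_in_fibre D u' < lighter_in_fibre D u)%N.
Proof.
move=> du ku' wu'; apply: proper_card; apply/properP; split.
  apply/subsetP => v; rewrite !inE => /andP[/eqP kv wv].
  by rewrite kv ku' eqxx /= (lt_trans wv wu').
have bu' : (mdeg u' < D.+1)%N by rewrite ltnS.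
by exists (BMultinom bu'); rewrite !inE /= ?ku' ?eqxx //= ?wu' ?ltxx.
Qed.

Lemma normal_form u :
  exists v, [/\ standard v, Akey v = Akey u & in_ideal Gs ('X_[u] - 'X_[v])].
Proof.
suff H N : forall u, (lighter_in_fibre (mdeg u) u < N)%N ->
    exists v, [/\ standard v, Akey v = Akey u & in_ideal Gs ('X_[u] - 'X_[v])].
  exact: H _ u (ltnSn _).
elim: N => // N IH {}u Hmu; case: (classic (standard u)) => Hs.
  by exists u; split => //; rewrite subrr; exact: in_ideal0.
have [u' [ku' wu' Hid]] := reduce_step Hs.
have du : mdeg u' = mdeg u by exact: Akey_mdeg ku'.
have lt : (lighter_in_fibre (mdeg u) u' < lighter_in_fibre (mdeg u) u)%N.
  by apply: lighter_in_fibre_lt; rewrite ?du.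
have [|v [vs kv Hv]] := IH u'; first by rewrite du (leq_trans lt) // -ltnS.
exists v; split => //; first by rewrite kv ku'.
have -> : 'X_[u] - 'X_[v] = ('X_[u] - 'X_[u']) + ('X_[u'] - 'X_[v]) :> {mpoly F[d + r]}.
  by rewrite addrA subrK.
exact: in_idealD.
Qed.

(** Generation: both monomials of a binomial of [L_ext] reduce to the same
    standard monomial of their common fibre. *)
Lemma prim_binomials_generate l : Lext ray part l -> in_ideal Gs (binom F l).
Proof.
move=> Hl; have [v1 [s1 k1 H1]] := normal_form (mpos l).
have [v2 [s2 k2 H2]] := normal_form (mneg l).
have kk : Akey (mpos l) = Akey (mneg l) by apply/Akey_eqP/Lext_Adeg.
have e : v1 = v2 by apply: standard_unique; rewrite // k1 k2.
rewrite -e in H2.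
have -> : binom F l = ('X_[mpos l] - 'X_[v1]) - ('X_[mneg l] - 'X_[v1]).
  by rewrite /binom opprB addrA subrK.
exact: in_idealB.
Qed.

Lemma init_form_in_prim_ideal h : toric_ideal F ray part h ->
  in_ideal (fun q => exists2 g, Gs g & q = init_form w g) (init_form w h).
Proof.
move=> Hh; rewrite [in X in in_ideal _ X]/init_form big_seq_cond.
apply: in_ideal_sum => m /andP[Hm /allP Hall].
have Hns := toric_heaviest_nonstandard Hh Hm Hall.
have [P [l [HP Hl ale]]] := nonstandard_divisible Hns.
rewrite -(submK ale) mpolyXD; apply/in_idealZ/in_idealMl/in_ideal_gen.
exists (binom F (ext part l)); first by exists P, l.
by rewrite init_form_binom //; exact: prim_binom_lt HP Hl.
Qed.

(** If [y^{ext l(P')+}] divides [y^{ext l(P)+}] then [P' \subset P]: on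
    [P'] the relation [l(P')] equals [1], since its cone avoids [P']. *)
Lemma prim_pos_le_sub (P P' : {set 'I_d}) l l' :
  prim_rel ray Sigma P l -> prim_coll Sigma P' -> prim_rel ray Sigma P' l' ->
  (mpos (ext part l') <= mpos (ext part l))%MM -> P' \subset P.
Proof.
move=> Hl HP' Hl' /mnm_lepP ba; apply/subsetP => p pP'.
have [s' _ [c' [_ el' disj']]] := prim_rel_disjoint fanH HP' Hl'.
move: (ba (lshift r p)); rewrite !mposE !ext_l el' /prel pP' (negbTE (disj' p pP')).
case/prim_rel_data: Hl => s0 _ [c0 [Hc0 _ el0]]; rewrite el0 /prel subr0.
case: (boolP (p \in P)) => // pnP; rewrite sub0r [X in (_ <= X)%N]posp_le0 //.
by rewrite oppr_le0; case: ifP => // ps0; exact: ltW (Hc0 p ps0).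
Qed.

(** Minimality: if [y^{ext l(P')+}] divides [y^{ext l(P)+}] then [P' = P]
    by minimality of [P], hence both binomials coincide by uniqueness of the
    primitive relation. *)
Lemma prim_binomials_minimal g : Gs g ->
  ~ in_ideal (fun q => exists h, [/\ Gs h, h <> g & q = init_form w h]) (init_form w g).
Proof.
move=> [P [l [HP Hl ->]]]; rewrite init_form_binom; last exact: prim_binom_lt HP Hl.
pose S b := exists P' l', [/\ prim_coll Sigma P', prim_rel ray Sigma P' l',
  binom F (ext part l') <> binom F (ext part l) & b = mpos (ext part l')].
move=> Hin; have HS : in_ideal (fun q : {mpoly F[d + r]} => exists2 b, S b & q = 'X_[b])
                                'X_[mpos (ext part l)].
  apply: (in_ideal_trans Hin) => q [h [[P' [l' [HP' Hl' ->]]] nhg ->]].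
  apply: in_ideal_gen; exists (mpos (ext part l')); first by exists P', l'.
  by rewrite init_form_binom //; exact: prim_binom_lt HP' Hl'.
have [_ [P' [l' [HP' Hl' nhg ->]]] le_pos] := in_monomial_ideal HS.
apply: nhg; have eP : P' = P.
  apply/eqP; rewrite eqEproper (prim_pos_le_sub Hl HP' Hl' le_pos) /=.
  by apply/negP => /HP.2; apply/negP; exact: HP'.1.
rewrite eP in Hl'; have e := prim_rel_unique fanH Hl Hl'.
have ee j : ext part l' j = ext part l j.
  rewrite /ext; case: (split j) => [p|i]; first by rewrite e.
  by congr (- _); apply: eq_bigr => p _; rewrite e.
by rewrite /binom; congr ('X_[_] - 'X_[_]); apply/mnmP => j; rewrite ?mposE ?mnegE ee.
Qed.

End StandardMonomials.

Theorem mainTheorem5 (R : realFieldType) (F : fieldType) (n d r : nat)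
    (ray : 'I_d -> 'I_n -> int) (Sigma : {set {set 'I_d}}) (part : 'I_d -> 'I_r) :
  smooth_projective_fan R ray Sigma ->
  nef_partition ray Sigma part ->
  forall w : 'I_(d + r) -> R,
  Tw_eq_Tmax ray Sigma part w ->
  minimal_groebner w (toric_ideal F ray part) (prim_binomials F ray Sigma part) /\
  (forall l, Lext ray part l ->
     in_ideal (prim_binomials F ray Sigma part) (binom F l)).
Proof.
move=> fanH nefH w TwH.
split; last exact (prim_binomials_generate F fanH nefH TwH).
split; last exact (prim_binomials_minimal fanH TwH).
split=> [g|f]; first exact: prim_binomial_toric.
split=> Hf; apply: (in_ideal_trans Hf) => q.
- by case=> h Hh ->; exact (init_form_in_prim_ideal fanH nefH TwH Hh).
- case=> g Hg ->; apply: in_ideal_gen; exists g => //.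
  exact: prim_binomial_toric Hg.
Qed.
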